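(* Let $p \in \mathbf{C}[x_1,\dots,x_n]$ be of the form $$p = x_1^{M_1}\cdots x_n^{M_n} + \sum_j c(j)\, x_1^{i_1(j)}\cdots x_n^{i_n(j)},$$ where the $c(j)\in\mathbf{C}$ are coefficients, all $M_i>0$, all monomials in the sum are different from $x_1^{M_1}\cdots x_n^{M_n}$, and $i_k(j)\le M_k$ for all $k,j$. If $q\in\mathbf{C}[x_1,\dots,x_n]$ and $\varphi(p)=q$ for some automorphism $\varphi$ of $\mathbf{C}[x_1,\dots,x_N]$ with $N\ge n$, then $\alpha(p)=q$ for some automorphism $\alpha$ of $\mathbf{C}[x_1,\dots,x_n]$.
   Context: Automorphisms are $\mathbf{C}$-algebra automorphisms; $\mathbf{C}[x_1,\dots,x_n]$ is regarded as a subalgebra of $\mathbf{C}[x_1,\dots,x_N]$. *)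

From HB Require Import structures.
From mathcomp Require Import all_boot all_order all_algebra.
From mathcomp Require Import reals.
From mathcomp.real_closed Require Import complex.
From mathcomp Require Import mpoly.
Set Implicit Arguments. Unset Strict Implicit. Unset Printing Implicit Defensive.
Import Order.TTheory GRing.Theory Num.Theory.
Local Open Scope ring_scope.

Definition is_alg_aut (K : fieldType) (k : nat)
    (f : {mpoly K[k]} -> {mpoly K[k]}) : Prop :=
  [/\ (forall (a : K) (p : {mpoly K[k]}), f (a *: p) = a *: f p),
      (forall p q : {mpoly K[k]}, f (p + q) = f p + f q),
      (forall p q : {mpoly K[k]}, f (p * q) = f p * f q),
      f 1 = 1 &
      bijective f].

Definition mpoly_incl (K : fieldType) (n N : nat) (h : (n <= N)%N)
    (p : {mpoly K[n]}) : {mpoly K[N]} :=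
  p \mPo [tuple 'X_(widen_ord h i) | i < n].

From HB Require Import structures.
From mathcomp Require Import all_boot all_order all_algebra.
From mathcomp Require Import reals.
From mathcomp.real_closed Require Import complex.
From mathcomp Require Import mpoly.
From mathcomp Require Import ring.
Set Implicit Arguments. Unset Strict Implicit. Unset Printing Implicit Defensive.
Import Order.TTheory GRing.Theory Num.Theory.
Local Open Scope ring_scope.

(* Let F_i = phi(x_i) for i < n and let d_i be the degree of F_i in the last N - n
   variables.  Since every exponent of p is bounded by M, phi(p) = p(F_1, ..., F_n)
   has degree at most D = sum_i M_i d_i in these variables, and its component of
   degree D does not vanish; as phi(p) = q has degree 0 and all M_i > 0, every d_i
   is 0, i.e. phi maps K[x_1..x_n] into itself.  The Jacobian matrix of phi is then
   block triangular, so by the chain rule so is that of phi^-1, and in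
   characteristic 0 this means that phi^-1 maps K[x_1..x_n] into itself as well. *)

Lemma rmorph_mmap (k : nat) (R S T : nzRingType) (f : R -> S) (h : 'I_k -> S)
    (s : {rmorphism S -> T}) (g : {mpoly R[k]}) :
  s (mmap f h g) = mmap (s \o f) (s \o h) g.
Proof.
rewrite /mmap rmorph_sum; apply: eq_bigr => m _; rewrite rmorphM /mmap1 rmorph_prod.
by congr (_ * _); apply: eq_bigr => i _; rewrite rmorphXn.
Qed.

Lemma eq_mmap (k : nat) (R S : nzRingType) (f1 f2 : R -> S) (h1 h2 : 'I_k -> S)
    (g : {mpoly R[k]}) :
  f1 =1 f2 -> h1 =1 h2 -> mmap f1 h1 g = mmap f2 h2 g.
Proof.
move=> ef eh; rewrite /mmap; apply: eq_bigr => m _; rewrite ef /mmap1.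
by congr (_ * _); apply: eq_bigr => i _; rewrite eh.
Qed.

Lemma comp_mpolyA (K : comNzRingType) (k l m : nat) (g : {mpoly K[k]})
    (t1 : k.-tuple {mpoly K[l]}) (t2 : l.-tuple {mpoly K[m]}) :
  (g \mPo t1) \mPo t2 = g \mPo [tuple tnth t1 i \mPo t2 | i < k].
Proof.
rewrite {1}/comp_mpoly rmorph_mmap /comp_mpoly; apply: eq_mmap => x /=.
  exact: comp_mpolyC.
by rewrite tnth_map tnth_ord_tuple.
Qed.

Lemma mpolyXU_neq0 (K : nzRingType) (k : nat) (i : 'I_k) : ('X_i : {mpoly K[k]}) != 0.
Proof.
apply/eqP => /(congr1 (mcoeff U_(i))); rewrite mcoeffXU eqxx mcoeff0.
by move/eqP; rewrite oner_eq0.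
Qed.

Lemma mderivXU (K : nzRingType) (k : nat) (i l : 'I_k) :
  mderiv l ('X_i : {mpoly K[k]}) = (i == l)%:R.
Proof.
rewrite mderivX mnm1E; case: eqP => [<-|_]; last by rewrite scale0r.
by rewrite -{1}[U_(i)%MM]add0m addmK mpolyX0 scale1r.
Qed.

Lemma mderiv_comp_mpoly (K : comNzRingType) (k N : nat)
    (t : k.-tuple {mpoly K[N]}) (j : 'I_N) (g : {mpoly K[k]}) :
  mderiv j (g \mPo t) = \sum_(i < k) (mderiv i g \mPo t) * mderiv j (tnth t i).
Proof.
pose P (g : {mpoly K[k]}) :=
  mderiv j (g \mPo t) = \sum_(i < k) (mderiv i g \mPo t) * mderiv j (tnth t i).
have PM a b : P a -> P b -> P (a * b).
  rewrite /P => Pa Pb; rewrite rmorphM /= mderivM Pa Pb mulr_suml mulr_sumr -big_split.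
  apply: eq_bigr => i _ /=; rewrite mderivM rmorphD !rmorphM /=; ring.
have P1 : P 1.
  rewrite /P rmorph1 -mpolyC1 mderivC big1 // => i _.
  by rewrite mderivC comp_mpoly0 mul0r.
have PX i : P 'X_i.
  rewrite /P comp_mpolyXU -tnth_nth (bigD1 i) //= big1 ?addr0.
    by rewrite mderivXU eqxx comp_mpoly1 mul1r.
  by move=> l; rewrite eq_sym => /negbTE nil; rewrite mderivXU nil comp_mpoly0 mul0r.
have PXm m : P 'X_[m].
  rewrite mpolyXE_id; apply: (big_ind P) => // i _.
  by elim: (m i) => [|e ih]; rewrite ?expr0 // exprS; apply: PM.
elim/mpolyind: g => [|c m p _ _ Pp].
  by rewrite /P comp_mpoly0 mderiv0 big1 // => i _; rewrite mderiv0 comp_mpoly0 mul0r.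
rewrite /P comp_mpolyD comp_mpolyZ mderivD mderivZ PXm Pp scaler_sumr -big_split.
by apply: eq_bigr => i _; rewrite mderivD mderivZ comp_mpolyD comp_mpolyZ mulrDl scalerAl.
Qed.

Section AlgAut.
Variables (K : fieldType) (N : nat) (phi : {mpoly K[N]} -> {mpoly K[N]}).
Hypothesis phi_aut : is_alg_aut phi.

Lemma alg_aut_comp_mpoly (g : {mpoly K[N]}) : phi g = g \mPo [tuple phi 'X_j | j < N].
Proof.
have [phiZ phiD phiM phi1 _] := phi_aut.
have phi0 : phi 0 = 0 by apply: (addIr (phi 0)); rewrite -phiD !add0r.
have phiX x k : phi (x ^+ k) = phi x ^+ k.
  by elim: k => [|k ih]; rewrite ?expr0 // !exprS phiM ih.
rewrite {1}(mpolyE g) (big_morph phi phiD phi0) [in RHS](mpolyE g) raddf_sum /=.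
apply: eq_bigr => m _; rewrite phiZ comp_mpolyZ comp_mpolyX mpolyXE_id.
rewrite (big_morph phi phiM phi1); congr (_ *: _).
by apply: eq_bigr => i _; rewrite phiX tnth_map tnth_ord_tuple.
Qed.

Lemma alg_aut_eq0 (g : {mpoly K[N]}) : (phi g == 0) = (g == 0).
Proof.
have phi_inj : injective phi by case: phi_aut => _ _ _ _ /bij_inj.
have phi0 : phi 0 = 0 by rewrite alg_aut_comp_mpoly comp_mpoly0.
by rewrite -{1}phi0 (inj_eq phi_inj).
Qed.

Lemma alg_aut_inv (psi : {mpoly K[N]} -> {mpoly K[N]}) :
  cancel phi psi -> cancel psi phi -> is_alg_aut psi.
Proof.
have [phiZ phiD phiM phi1 _] := phi_aut; move=> phiK psiK; split.
- by move=> a g; rewrite -{1}(psiK g) -phiZ phiK.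
- by move=> g h; rewrite -{1}(psiK g) -{1}(psiK h) -phiD phiK.
- by move=> g h; rewrite -{1}(psiK g) -{1}(psiK h) -phiM phiK.
- by rewrite -phi1 phiK.
- by exists phi.
Qed.

End AlgAut.

Section Subalgebra.
Variables (K : fieldType) (n N : nat).
Hypothesis hnN : (n <= N)%N.

Definition trunc_vars : N.-tuple {mpoly K[N]} :=
  [tuple if (j < n)%N then 'X_j else 0 | j < N].

Definition restr_vars : N.-tuple {mpoly K[n]} :=
  [tuple oapp (fun i : 'I_n => 'X_i) 0 (insub (val j)) | j < N].

Definition mpoly_restr (g : {mpoly K[N]}) : {mpoly K[n]} := g \mPo restr_vars.

Definition in_subalg (g : {mpoly K[N]}) : Prop := g \mPo trunc_vars = g.

Lemma mpoly_restrK : cancel (mpoly_incl hnN) mpoly_restr.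
Proof.
move=> g; rewrite /mpoly_restr /mpoly_incl comp_mpolyA -[RHS]comp_mpoly_id.
congr (_ \mPo _); apply: eq_from_tnth => i.
rewrite !tnth_map !tnth_ord_tuple comp_mpolyXU -tnth_nth tnth_map tnth_ord_tuple /=.
by rewrite (valK i).
Qed.

Lemma mpoly_incl_restr (g : {mpoly K[N]}) :
  mpoly_incl hnN (mpoly_restr g) = g \mPo trunc_vars.
Proof.
rewrite /mpoly_restr /mpoly_incl comp_mpolyA; congr (_ \mPo _).
apply: eq_from_tnth => j; rewrite !tnth_map !tnth_ord_tuple.
case: insubP => [i ji vi|/negbTE ->] /=; last by rewrite comp_mpoly0.
rewrite ji comp_mpolyXU -tnth_nth tnth_map tnth_ord_tuple; congr 'X_(_).
exact: val_inj.
Qed.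

Lemma in_subalg_incl (g : {mpoly K[n]}) : in_subalg (mpoly_incl hnN g).
Proof. by rewrite /in_subalg -mpoly_incl_restr mpoly_restrK. Qed.

Lemma mpoly_restrKV (g : {mpoly K[N]}) :
  in_subalg g -> mpoly_incl hnN (mpoly_restr g) = g.
Proof. by rewrite mpoly_incl_restr. Qed.

Lemma in_subalg_comp (t : n.-tuple {mpoly K[N]}) (g : {mpoly K[n]}) :
  (forall i, in_subalg (tnth t i)) -> in_subalg (g \mPo t).
Proof.
move=> ht; rewrite /in_subalg comp_mpolyA; congr (_ \mPo _).
by apply: eq_from_tnth => i; rewrite tnth_map tnth_ord_tuple ht.
Qed.

Lemma mpoly_incl_eq0 (g : {mpoly K[n]}) : (mpoly_incl hnN g == 0) = (g == 0).
Proof.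
apply/eqP/eqP => [g0|->]; last exact: comp_mpoly0.
by rewrite -[g]mpoly_restrK g0 /mpoly_restr comp_mpoly0.
Qed.

Lemma alg_aut_incl (phi : {mpoly K[N]} -> {mpoly K[N]}) (g : {mpoly K[n]}) :
  is_alg_aut phi ->
  phi (mpoly_incl hnN g) = g \mPo [tuple phi 'X_(widen_ord hnN i) | i < n].
Proof.
move=> phi_aut; rewrite alg_aut_comp_mpoly // /mpoly_incl comp_mpolyA.
congr (_ \mPo _); apply: eq_from_tnth => i.
by rewrite !tnth_map !tnth_ord_tuple comp_mpolyXU -tnth_nth tnth_map tnth_ord_tuple.
Qed.

Lemma alg_aut_incl_in_subalg (phi : {mpoly K[N]} -> {mpoly K[N]}) (g : {mpoly K[n]}) :
  is_alg_aut phi -> (forall i : 'I_n, in_subalg (phi 'X_(widen_ord hnN i))) ->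
  in_subalg (phi (mpoly_incl hnN g)).
Proof.
move=> phi_aut phiX; rewrite alg_aut_incl //; apply: in_subalg_comp => i.
by rewrite tnth_map tnth_ord_tuple.
Qed.

Lemma in_subalg_mderiv (g : {mpoly K[N]}) (j : 'I_N) :
  in_subalg g -> (n <= j)%N -> mderiv j g = 0.
Proof.
move=> <- hj; rewrite mderiv_comp_mpoly big1 // => k _.
rewrite tnth_map tnth_ord_tuple; case: ifP => hk; last by rewrite mderiv0 mulr0.
rewrite mderivXU; case: eqP => [ekj|]; last by rewrite mulr0.
by move: hk; rewrite ekj ltnNge hj.
Qed.

Lemma mderiv_in_subalg (g : {mpoly K[N]}) : [pchar K] =i pred0 ->
  (forall j : 'I_N, (n <= j)%N -> mderiv j g = 0) -> in_subalg g.
Proof.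
move=> /pcharf0P K0 dg.
have high0 m : m \in msupp g -> forall j : 'I_N, (n <= j)%N -> m j = 0%N.
  move=> gm j hj; apply/eqP; apply: contraTT gm => mj.
  have := congr1 (mcoeff (m - U_(j))%MM) (dg j hj).
  rewrite mcoeff_mderiv mcoeff0 submK; last first.
    by apply/mnm_lepP => l; rewrite mnm1E; case: eqP => [<-|]; rewrite ?lt0n.
  by rewrite -mulr_natr => /eqP; rewrite mulf_eq0 K0 orbF mcoeff_msupp negbK.
rewrite /in_subalg {1}(mpolyE g) raddf_sum /= [RHS](mpolyE g).
apply: eq_big_seq => m gm; rewrite comp_mpolyZ comp_mpolyX mpolyXE_id; congr (_ *: _).
apply: eq_bigr => j _; rewrite tnth_map tnth_ord_tuple; case: ifP => // /negbT.
by rewrite -leqNgt => /(high0 m gm) ->; rewrite !expr0.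
Qed.

End Subalgebra.

Section Tscale.
Variables (K : fieldType) (n N : nat).

(* (tscale g).[t] = g(x_1, ..., x_n, t x_(n+1), ..., t x_N), so the degree of
   tscale g is the degree of g in the last N - n variables. *)
Definition tscale_var (j : 'I_N) : {poly {mpoly K[N]}} :=
  if (j < n)%N then ('X_j)%:P else ('X_j)%:P * 'X.

Definition tscale : {mpoly K[N]} -> {poly {mpoly K[N]}} :=
  mmap (polyC \o mpolyC N (R:=K)) tscale_var.

HB.instance Definition _ := GRing.RMorphism.copy tscale tscale.

Lemma horner_tscale (g c : {mpoly K[N]}) :
  (tscale g).[c] = g \mPo [tuple if (j < n)%N then 'X_j else 'X_j * c | j < N].
Proof.
rewrite /tscale /mmap horner_sum; apply: eq_bigr => m _.
rewrite hornerM /= hornerC /mmap1 horner_prod; congr (_ * _).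
apply: eq_bigr => j _; rewrite horner_exp /tscale_var tnth_map tnth_ord_tuple.
by case: ifP; rewrite ?hornerC // hornerMX hornerC.
Qed.

Lemma horner1_tscale (g : {mpoly K[N]}) : (tscale g).[1] = g.
Proof.
rewrite horner_tscale -[RHS]comp_mpoly_id; congr (_ \mPo _).
by apply: eq_from_tnth => j; rewrite !tnth_map !tnth_ord_tuple mulr1 if_same.
Qed.

Lemma horner0_tscale (g : {mpoly K[N]}) : (tscale g).[0] = g \mPo trunc_vars K n N.
Proof.
rewrite horner_tscale; congr (_ \mPo _).
by apply: eq_from_tnth => j; rewrite !tnth_map !tnth_ord_tuple mulr0.
Qed.

Lemma tscale_eq0 (g : {mpoly K[N]}) : (tscale g == 0) = (g == 0).
Proof.
by apply/eqP/eqP => [g0|->]; [rewrite -[g]horner1_tscale g0 horner0 | exact: rmorph0].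
Qed.

Lemma in_subalgP (g : {mpoly K[N]}) : in_subalg n g <-> (size (tscale g) <= 1)%N.
Proof.
split=> [<-|/size1_polyC g_const]; last first.
  by rewrite /in_subalg -horner0_tscale -[RHS]horner1_tscale g_const !hornerC.
suff -> : tscale (g \mPo trunc_vars K n N) = (g \mPo trunc_vars K n N)%:P.
  exact: size_polyC_leq1.
rewrite /tscale /comp_mpoly !rmorph_mmap.
apply: eq_mmap => [c|j] /=; first by rewrite /tscale mmapC.
rewrite tnth_map tnth_ord_tuple; case: ifP => hj; last by rewrite !rmorph0.
by rewrite /tscale mmapX mmap1U /tscale_var hj.
Qed.

Lemma tscale_comp_mpoly (k : nat) (g : {mpoly K[k]}) (t : k.-tuple {mpoly K[N]}) :
  tscale (g \mPo t) =
  \sum_(m <- msupp g) (g@_m)%:MP%:P * \prod_i tscale (tnth t i) ^+ m i.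
Proof.
rewrite comp_mpolyE rmorph_sum; apply: eq_bigr => m _.
rewrite -mul_mpolyC rmorphM rmorph_prod /= {1}/tscale mmapC; congr (_ * _).
by apply: eq_bigr => i _; rewrite rmorphXn.
Qed.

Lemma tscale_const (g : {mpoly K[N]}) : (size (tscale g) <= 1)%N -> tscale g = g%:P.
Proof.
move=> /size1_polyC g_const; have := horner1_tscale g.
by rewrite g_const hornerC => ->.
Qed.

End Tscale.

Definition wdeg (k : nat) (d : 'I_k -> nat) (m : 'X_{1..k}) : nat :=
  (\sum_(i < k) m i * d i)%N.

Lemma wdeg_eq_le (k : nat) (d : 'I_k -> nat) (m M : 'X_{1..k}) :
  (forall i, m i <= M i)%N -> wdeg d m = wdeg d M ->
  forall i, m i = M i \/ d i = 0%N.
Proof.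
move=> le_mM /eqP; rewrite /wdeg.
have le_w i : (m i * d i <= M i * d i)%N by rewrite leq_mul2r le_mM orbT.
rewrite (leqif_sum (fun i _ => leqif_eq (le_w i))).2 => /forallP eq_w i.
have [->|d_neq0] := eqVneq (d i) 0%N; first by right.
by left; apply/eqP; rewrite -(eqn_pmul2r (m:=d i)) ?lt0n // (eqP (eq_w i)).
Qed.

Section TopCoef.
Variables (R : idomainType) (k : nat) (f : 'I_k -> {poly R}).
Hypothesis f_neq0 : forall i, f i != 0.

Lemma size_prod_expn (m : 'X_{1..k}) :
  (size (\prod_i f i ^+ m i)).-1 = wdeg (fun i => (size (f i)).-1) m.
Proof.
have fm_neq0 i : f i ^+ m i != 0 by rewrite expf_neq0.
have size_fm i : size (f i ^+ m i) = (m i * (size (f i)).-1 + 1)%N.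
  by rewrite addn1 mulnC -size_exp prednK // size_poly_gt0.
rewrite size_prod // (eq_bigr _ (fun i _ => size_fm i)) big_split /= sum1_card.
by rewrite -addSn addnK.
Qed.

Lemma coef_top_sum_prod (r : seq 'X_{1..k}) (c : 'X_{1..k} -> R) (D : nat) :
  (forall m, m \in r -> wdeg (fun i => (size (f i)).-1) m <= D)%N ->
  (\sum_(m <- r) (c m)%:P * \prod_i f i ^+ m i)`_D =
  \sum_(m <- r | wdeg (fun i => (size (f i)).-1) m == D)
    c m * \prod_i lead_coef (f i) ^+ m i.
Proof.
move=> le_wD; rewrite coef_sum [RHS]big_mkcond /=; apply: eq_big_seq => m mr.
have -> : \prod_i lead_coef (f i) ^+ m i = lead_coef (\prod_i f i ^+ m i).
  by rewrite lead_coef_prod; apply: eq_bigr => i _; rewrite lead_coef_exp.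
rewrite coefCM.
have P_neq0 : \prod_i f i ^+ m i != 0 by apply/prodf_neq0 => i _; rewrite expf_neq0.
rewrite lead_coefE size_prod_expn; case: eqP => [-> //|/eqP w_neq].
rewrite nth_default ?mulr0 //; move: P_neq0 (le_wD m mr) w_neq.
rewrite -size_poly_gt0 -size_prod_expn.
by case: (size _) => // s _; rewrite ltn_neqAle eq_sym => -> ->.
Qed.

End TopCoef.

Lemma sum_prod_exchange (S : comNzRingType) (k : nat) (r : seq 'X_{1..k})
    (c : 'X_{1..k} -> S) (F L : 'I_k -> S) (M : 'X_{1..k}) :
  (forall m, m \in r -> forall i, m i = M i \/ L i = F i) ->
  (\sum_(m <- r) c m * \prod_i L i ^+ m i) * \prod_i F i ^+ M i =
  (\sum_(m <- r) c m * \prod_i F i ^+ m i) * \prod_i L i ^+ M i.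
Proof.
move=> agree; rewrite !mulr_suml; apply: eq_big_seq => m mr; rewrite -!mulrA.
congr (_ * _); rewrite -!big_split; apply: eq_bigr => i _ /=.
by case: (agree m mr i) => ->; rewrite // mulrC.
Qed.

Section AutImage.
Variables (K : fieldType) (n N : nat) (hnN : (n <= N)%N).
Variables (phi : {mpoly K[N]} -> {mpoly K[N]}) (p : {mpoly K[n]}) (M : 'X_{1..n}).
Hypotheses (phi_aut : is_alg_aut phi) (pM_neq0 : p@_M != 0).
Hypothesis le_pM : forall m, m \in msupp p -> forall i, (m i <= M i)%N.

Let F (i : 'I_n) := phi 'X_(widen_ord hnN i).
Let f (i : 'I_n) := tscale n (F i).
Let d (i : 'I_n) := (size (f i)).-1.

Let f_neq0 i : f i != 0.
Proof. by rewrite tscale_eq0 alg_aut_eq0 // mpolyXU_neq0. Qed.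

(* With L_i the leading coefficients of the tscale F_i and g the part of p of
   weight wdeg d M, the top coefficient C satisfies
   C * prod_i F_i ^+ M_i = phi g * prod_i L_i ^+ M_i, because a monomial of g agrees
   with M wherever L_i <> F_i; and phi g <> 0 since g contains the monomial M. *)
Lemma coef_top_tscale_alg_aut_neq0 :
  (tscale n (phi (mpoly_incl hnN p)))`_(wdeg d M) != 0.
Proof.
pose top := [seq m <- msupp p | wdeg d m == wdeg d M].
pose L i := lead_coef (f i).
have M_top : M \in top by rewrite mem_filter eqxx mcoeff_msupp.
have agree m : m \in top -> forall i, m i = M i \/ L i = F i.
  rewrite mem_filter => /andP[/eqP wm mp] i.
  case: (wdeg_eq_le (le_pM mp) wm i) => [|di]; [by left | right].
  by rewrite /L /f tscale_const ?lead_coefC // -/(f i); move: di; rewrite /d; case: size => [|[]].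
pose g := \sum_(m <- top) p@_m *: 'X_[m].
have g_neq0 : g != 0.
  apply: contraNneq pM_neq0 => /(congr1 (mcoeff M)); rewrite mcoeff0 raddf_sum /=.
  rewrite (bigD1_seq M) ?filter_uniq ?msupp_uniq //= big1_seq => [|m /andP[mM _]].
    by rewrite mcoeffZ mcoeffX eqxx mulr1 addr0 => ->.
  by rewrite mcoeffZ mcoeffX (negbTE mM) mulr0.
have phig : phi (mpoly_incl hnN g) = \sum_(m <- top) (p@_m)%:MP * \prod_i F i ^+ m i.
  rewrite alg_aut_incl // /g raddf_sum /=; apply: eq_bigr => m _.
  rewrite comp_mpolyZ comp_mpolyX mul_mpolyC; congr (_ *: _).
  by apply: eq_bigr => i _; rewrite tnth_map tnth_ord_tuple.
rewrite alg_aut_incl // tscale_comp_mpoly.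
have tF m : \prod_i tscale n (tnth [tuple phi 'X_(widen_ord hnN i) | i < n] i) ^+ m i =
            \prod_i f i ^+ m i.
  by apply: eq_bigr => i _; rewrite tnth_map tnth_ord_tuple.
under eq_bigr do rewrite tF.
rewrite coef_top_sum_prod // => [|m mp]; last first.
  by apply: leq_sum => i _; rewrite leq_mul2r le_pM ?orbT.
have Y_neq0 : phi (mpoly_incl hnN g) != 0 by rewrite alg_aut_eq0 // mpoly_incl_eq0.
rewrite -big_filter -/top; apply: contraNneq Y_neq0 => C0.
have := sum_prod_exchange (fun m => (p@_m)%:MP) agree.
rewrite -/L C0 mul0r -phig => /esym/eqP; rewrite mulf_eq0 => /orP[-> //|].
rewrite prodf_seq_eq0 => /hasP[i _ /=]; rewrite expf_eq0 lead_coef_eq0 (negbTE (f_neq0 i)).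
by rewrite andbF.
Qed.

Lemma alg_aut_X_in_subalg : (forall i, 0 < M i)%N ->
  in_subalg n (phi (mpoly_incl hnN p)) ->
  forall i : 'I_n, in_subalg n (phi 'X_(widen_ord hnN i)).
Proof.
move=> M_gt0 /in_subalgP size_le1 i; apply/in_subalgP.
have /eqP : wdeg d M = 0%N.
  apply/eqP; rewrite -leqn0 -ltnS; apply: leq_trans size_le1.
  apply: contraNT coef_top_tscale_alg_aut_neq0; rewrite -leqNgt => ?.
  by rewrite nth_default.
rewrite sum_nat_eq0 => /forallP/(_ i); rewrite muln_eq0 eqn0Ngt M_gt0 /=.
by rewrite -/(F i) -/(f i) /d; case: size => [|[]].
Qed.

End AutImage.

(* P J P + (1 - P) has the right inverse P H P + (1 - P), hence the same left
   inverse, which forces P H P * P J = P. *)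
Lemma idem_trig_mulmx1 (R : comUnitRingType) (k : nat) (P J H : 'M[R]_k) :
  P *m P = P -> J *m H = 1%:M ->
  P *m J *m (1%:M - P) = 0 -> P *m H *m (1%:M - P) = 0.
Proof.
move=> PP JH; have [Q defQ] : exists Q, 1%:M - P = Q by eexists.
rewrite defQ => PJQ.
have PQ1 : P + Q = 1%:M by rewrite -defQ addrC subrK.
have PQ : P *m Q = 0 by rewrite -defQ mulmxBr mulmx1 PP subrr.
have QP : Q *m P = 0 by rewrite -defQ mulmxBl mul1mx PP subrr.
have QQ : Q *m Q = Q by rewrite -{2}defQ mulmxBr mulmx1 QP subr0.
have PJP : P *m J *m P = P *m J.
  by rewrite -{2}[P *m J]mulmx1 -PQ1 mulmxDr PJQ addr0.
have PHPJ : P *m H *m P *m (P *m J) = P.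
  have /mulmx1C : (P *m J + Q) *m (P *m H *m P + Q) = 1%:M.
    rewrite mulmxDl !mulmxDr PJQ addr0 !mulmxA QP !mul0mx add0r QQ -PQ1.
    by rewrite !PJP -(mulmxA P J H) JH mulmx1 PP.
  rewrite mulmxDl !mulmxDr -(mulmxA _ P Q) PQ mulmx0 addr0 (mulmxA Q P) QP mul0mx add0r QQ.
  by rewrite -PQ1 => /addIr.
by rewrite -{1}PHPJ -!mulmxA (mulmxA J H) JH mul1mx PQ !mulmx0.
Qed.

Definition jacobian (K : comNzRingType) (k N : nat) (t : k.-tuple {mpoly K[N]}) :
  'M[{mpoly K[N]}]_(N, k) := \matrix_(j, i) mderiv j (tnth t i).

Lemma jacobian_comp (K : comNzRingType) (m k N : nat)
    (s : m.-tuple {mpoly K[k]}) (t : k.-tuple {mpoly K[N]}) :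
  jacobian [tuple tnth s l \mPo t | l < m] =
  jacobian t *m map_mx (comp_mpoly t) (jacobian s).
Proof.
apply/matrixP => j l; rewrite !mxE tnth_map tnth_ord_tuple mderiv_comp_mpoly.
by apply: eq_bigr => i _; rewrite !mxE mulrC.
Qed.

Lemma jacobian_id (K : comNzRingType) (N : nat) :
  jacobian [tuple ('X_i : {mpoly K[N]}) | i < N] = 1%:M.
Proof. by apply/matrixP => j i; rewrite !mxE tnth_map tnth_ord_tuple mderivXU eq_sym. Qed.

Section HighProjection.
Variables (R : nzRingType) (n N : nat).

Definition high_proj : 'M[R]_N := diag_mx (\row_(i < N) ((n <= i)%N)%:R).

Lemma high_proj_idem : high_proj *m high_proj = high_proj.
Proof.
rewrite mulmx_diag; congr diag_mx; apply/rowP => i; rewrite !mxE.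
by case: (n <= i)%N; rewrite ?mulr1 ?mulr0.
Qed.

Lemma high_low_eq0P (A : 'M[R]_N) :
  high_proj *m A *m (1%:M - high_proj) = 0 <->
  (forall i j : 'I_N, (n <= i)%N -> (j < n)%N -> A i j = 0).
Proof.
have entry i j : (high_proj *m A *m (1%:M - high_proj)) i j =
                 if (n <= i)%N && (j < n)%N then A i j else 0.
  rewrite mulmxBr mulmx1 (mxE _ _ i j) [X in _ + X](mxE _ _ i j).
  rewrite /high_proj mul_mx_diag !mul_diag_mx !mxE ltnNge.
  by case: (n <= i)%N; case: (n <= j)%N; rewrite /= ?mul0r ?mul1r ?mulr1 ?mulr0 ?subrr ?subr0.
split=> [/matrixP A0 i j hi hj | A0]; first by have := A0 i j; rewrite entry hi hj mxE.
by apply/matrixP => i j; rewrite entry mxE; case: ifP => // /andP[]; apply: A0.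
Qed.

End HighProjection.

Section RestrictAut.
Variables (K : fieldType) (n N : nat) (hnN : (n <= N)%N).
Variables (phi psi : {mpoly K[N]} -> {mpoly K[N]}).
Hypotheses (phi_aut : is_alg_aut phi) (phiK : cancel phi psi) (psiK : cancel psi phi).

Lemma alg_aut_inv_X_in_subalg : [pchar K] =i pred0 ->
  (forall i : 'I_n, in_subalg n (phi 'X_(widen_ord hnN i))) ->
  forall i : 'I_n, in_subalg n (psi 'X_(widen_ord hnN i)).
Proof.
move=> K0 phiX l; pose tphi := [tuple phi 'X_j | j < N].
have jac1 : jacobian tphi *m map_mx (comp_mpoly tphi) (jacobian [tuple psi 'X_j | j < N]) = 1%:M.
  rewrite -jacobian_comp -(jacobian_id K N); congr jacobian.
  by apply: eq_from_tnth => j; rewrite !tnth_map !tnth_ord_tuple -alg_aut_comp_mpoly // psiK.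
have phiX_low : high_proj _ n N *m jacobian tphi *m (1%:M - high_proj _ n N) = 0.
  apply/high_low_eq0P => i k hi hk; rewrite mxE tnth_map tnth_ord_tuple.
  have -> : k = widen_ord hnN (Ordinal hk) by exact: val_inj.
  exact: in_subalg_mderiv (phiX _) hi.
have /high_low_eq0P psiX_low := idem_trig_mulmx1 (high_proj_idem _ n N) jac1 phiX_low.
apply: mderiv_in_subalg => // j hj.
have := psiX_low j (widen_ord hnN l) hj (ltn_ord l).
rewrite !mxE tnth_map tnth_ord_tuple -alg_aut_comp_mpoly // => /eqP.
by rewrite alg_aut_eq0 // => /eqP.
Qed.

Lemma alg_aut_restr :
  (forall i : 'I_n, in_subalg n (phi 'X_(widen_ord hnN i))) ->
  (forall i : 'I_n, in_subalg n (psi 'X_(widen_ord hnN i))) ->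
  is_alg_aut (fun g => mpoly_restr n (phi (mpoly_incl hnN g))).
Proof.
move=> phiX psiX; have [phiZ phiD phiM phi1 _] := phi_aut.
have psi_aut := alg_aut_inv phi_aut phiK psiK.
split=> [a g|g h|g h||].
- by rewrite /mpoly_incl comp_mpolyZ phiZ /mpoly_restr comp_mpolyZ.
- by rewrite /mpoly_incl comp_mpolyD phiD /mpoly_restr comp_mpolyD.
- by rewrite /mpoly_incl rmorphM phiM /mpoly_restr rmorphM.
- by rewrite /mpoly_incl rmorph1 phi1 /mpoly_restr rmorph1.
exists (fun g => mpoly_restr n (psi (mpoly_incl hnN g))) => g.
  by rewrite mpoly_restrKV ?phiK ?mpoly_restrK //; apply: alg_aut_incl_in_subalg.
by rewrite mpoly_restrKV ?psiK ?mpoly_restrK //; apply: alg_aut_incl_in_subalg.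
Qed.

End RestrictAut.

Unset Implicit Arguments.

Theorem proposition1p4 (R : realType) (n N : nat) (hnN : (n <= N)%N)
    (M : 'X_{1..n}) (p q : {mpoly R[i][n]}) :
  (forall k : 'I_n, (0 < M k)%N) ->
  p@_M = 1 ->
  (forall m : 'X_{1..n}, m \in msupp p -> forall k : 'I_n, (m k <= M k)%N) ->
  (exists phi : {mpoly R[i][N]} -> {mpoly R[i][N]},
      is_alg_aut phi /\ phi (mpoly_incl hnN p) = mpoly_incl hnN q) ->
  exists alpha : {mpoly R[i][n]} -> {mpoly R[i][n]},
    is_alg_aut alpha /\ alpha p = q.
Proof.
move=> M_gt0 pM le_pM [phi [phi_aut phi_pq]].
have [psi phiK psiK] : bijective phi by case: phi_aut.
have phiX : forall i : 'I_n, in_subalg n (phi 'X_(widen_ord hnN i)).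
  apply: alg_aut_X_in_subalg phi_aut _ le_pM M_gt0 _; first by rewrite pM oner_eq0.
  by rewrite phi_pq; apply: in_subalg_incl.
have psiX := alg_aut_inv_X_in_subalg phi_aut psiK (pchar_num _) phiX.
exists (fun g => mpoly_restr n (phi (mpoly_incl hnN g))).
by split; [apply: alg_aut_restr | rewrite phi_pq mpoly_restrK].
Qed.
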